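(* Let $n$ be a positive integer with $n\equiv 2 \pmod 3$. Then the $(3,n;6)$-bipartite biregular cage has exactly $2+2n+\frac{(2+2n)n}{3}$ vertices, and every $(3,n;6)$-bipartite biregular cage is (isomorphic to) the incidence graph of the structure obtained from a Steiner triple system on $2n+3$ points by deleting one point and all triples containing it.
   Context: For integers $a,b\geq 2$ and even $g\ge 4$, an $(a,b;g)$-bipartite biregular graph is a finite simple bipartite graph of girth exactly $g$ in which all vertices of one bipartition class have degree $a$ and all vertices of the other class have degree $b$. An $(a,b;g)$-bipartite biregular cage is such a graph of minimum possible order. A Steiner triple system on $v$ points is a set of $v$ points with a family of 3-element subsets (triples) such that every pair of distinct points lies in exactly one triple. The incidence graph of a point-triple structure is the bipartite graph on points and triples with a point adjacent to a triple iff the point lies in it. *)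

From mathcomp Require Import all_boot.
Set Implicit Arguments. Unset Strict Implicit. Unset Printing Implicit Defensive.

Definition simple_graph (V : finType) (e : rel V) : Prop :=
  irreflexive e /\ symmetric e.

Definition girth_eq (V : finType) (e : rel V) (g : nat) : Prop :=
  (exists c : seq V, [/\ ucycle e c, 3 <= size c & size c = g]) /\
  (forall c : seq V, ucycle e c -> 3 <= size c -> g <= size c).

Definition deg (V : finType) (e : rel V) (x : V) : nat := #|[set y | e x y]|.

Definition bb_graph (a b g : nat) (V : finType) (e : rel V) : Prop :=
  [/\ simple_graph e,
      exists A : {set V},
        [/\ forall x y, e x y -> (x \in A) != (y \in A),
            forall x, x \in A -> deg e x = a &
            forall x, x \notin A -> deg e x = b]
    & girth_eq e g].

Definition bb_cage (a b g : nat) (V : finType) (e : rel V) : Prop :=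
  bb_graph a b g e /\
  (forall (W : finType) (f : rel W), bb_graph a b g f -> #|V| <= #|W|).

Definition STS (v : nat) (B : {set {set 'I_v}}) : Prop :=
  (forall T, T \in B -> #|T| = 3) /\
  (forall x y : 'I_v, x != y -> #|[set T in B | (x \in T) && (y \in T)]| = 1).

Definition inc_rel (v : nat) : rel ('I_v + {set 'I_v}) :=
  fun u w => match u, w with
             | inl p, inr T => p \in T
             | inr T, inl p => p \in T
             | _, _ => false
             end.

Definition derived_vertices (v : nat) (B : {set {set 'I_v}}) (x0 : 'I_v)
  : {set ('I_v + {set 'I_v})} :=
  [set u | match u with
           | inl p => p != x0
           | inr T => (T \in B) && (x0 \notin T)
           end].

Definition iso_induced (V W : finType) (e : rel V) (f : rel W) (S : {set W}) : Prop :=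
  exists h : V -> W,
    [/\ injective h, h @: [set: V] = S & forall x y, e x y = f (h x) (h y)].

From mathcomp Require Import all_boot zify.
Set Implicit Arguments. Unset Strict Implicit. Unset Printing Implicit Defensive.

(* Call the vertices of degree 3 lines and the others points.  Girth 6 means
   that two points have at most one common neighbour, so a point of degree n is
   at distance two from exactly 2n other points: there are at least 2n + 1
   points, hence at least 2n + 2 since 3 divides n times their number, and
   counting edges turns this into the lower bound on the order.  In a graph
   attaining the bound every point is at distance two from all other points but
   one, its mate; the lines together with the triples {oo, p, mate p}, for a new
   point oo, form a Steiner triple system on 2n + 3 points whose derived
   structure at oo is the graph.  Conversely, Skolem's triple system on
   6k + 1 = 2n + 3 points, derived at one of its points, attains the bound. *)

Lemma card_bigcup_disjoint (I T : finType) (P : {pred I}) (F : I -> {set T}) :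
  {in P &, forall i j, i != j -> [disjoint F i & F j]} ->
  #|\bigcup_(i in P) F i| = \sum_(i in P) #|F i|.
Proof.
move=> disF; rewrite -!big_enum /=.
have : {subset enum P <= P} by move=> i; rewrite mem_enum.
elim: (enum P) (enum_uniq P) => [|i s IHs] /=; first by rewrite !big_nil cards0.
move=> /andP[i_s s_uniq] sP; rewrite !big_cons cardsU -IHs //; last first.
  by move=> j sj; apply: sP; rewrite inE sj orbT.
suff -> : F i :&: \bigcup_(j <- s) F j = set0 by rewrite cards0 subn0.
apply/eqP; rewrite setI_eq0 bigcup_seq.
apply: bigcup_disjoint => j sj; rewrite disF ?sP ?inE ?sj ?eqxx ?orbT //.
by apply: contraNneq i_s => ->.
Qed.

Lemma cards3 (T : finType) (x y z : T) :
  x != y -> x != z -> y != z -> #|[set x; y; z]| = 3.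
Proof. by move=> xy xz yz; rewrite -setUA cardsU1 cards2 yz !inE negb_or xy xz. Qed.

Lemma imset_bij_card (T T' : finType) (S : {set T}) (S' : {set T'}) :
  0 < #|S| -> #|S| = #|S'| -> exists f : T -> T', {in S &, injective f} /\ f @: S = S'.
Proof.
case/card_gt0P=> z zS cardS.
exists (fun x => enum_val (cast_ord cardS (enum_rank_in zS x))); split.
  move=> x y xS yS /enum_val_inj /cast_ord_inj /(congr1 enum_val).
  by rewrite !enum_rankK_in.
apply/setP => y; apply/imsetP/idP => [[x _ ->]|yS']; first exact: enum_valP.
exists (enum_val (cast_ord (esym cardS) (enum_rank_in yS' y))); first exact: enum_valP.
by rewrite enum_valK_in cast_ordKV enum_rankK_in.
Qed.

(** * Bipartite graphs without 4-cycles *)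

Definition nbrs (V : finType) (e : rel V) (x : V) : {set V} := [set y | e x y].

Definition common_nbr (V : finType) (e : rel V) (p q : V) : bool :=
  [exists a, e p a && e a q].

Definition nbrs2 (V : finType) (e : rel V) (p : V) : {set V} :=
  [set q | (q != p) && common_nbr e p q].

Definition mate (V : finType) (e : rel V) (p q : V) : bool :=
  (p != q) && ~~ common_nbr e p q.

Definition mates (V : finType) (e : rel V) (A : {set V}) (p : V) : {set V} :=
  [set q in ~: A | mate e p q].

Definition C4_free (V : finType) (e : rel V) : Prop :=
  forall u w x y, u != w -> x != y -> e u x -> e w x -> e u y -> e w y -> False.

Lemma C4_free_girth (V : finType) (e : rel V) (g : nat) :
  simple_graph e -> girth_eq e g -> 4 < g -> C4_free e.
Proof.
move=> [e_irr e_sym] [_ g_min] g_gt4 u w x y uw xy eux ewx euy ewy.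
have neq s t : e s t -> s != t by apply: contraTneq => ->; rewrite e_irr.
suff /g_min : ucycle e [:: u; x; w; y] by move/(_ isT); rewrite leqNgt g_gt4.
rewrite /ucycle /= eux (e_sym x) ewx ewy (e_sym y) euy /= !inE !negb_or.
by rewrite (eq_sym x) uw xy !(neq _ _ eux, neq _ _ euy, neq _ _ ewx, neq _ _ ewy).
Qed.

Section BipartiteGraph.
Variables (V : finType) (e : rel V) (A : {set V}).
Hypothesis e_sym : symmetric e.
Hypothesis e_bip : forall x y, e x y -> (x \in A) != (y \in A).

Lemma adj_side x y : e x y -> (y \in A) = (x \notin A).
Proof. by move/e_bip; case: (x \in A); case: (y \in A). Qed.

Lemma mate_sym p q : mate e p q = mate e q p.
Proof.
rewrite /mate eq_sym; congr (_ && ~~ _).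
by apply/existsP/existsP => -[a /andP[h1 h2]]; exists a; rewrite e_sym h2 e_sym h1.
Qed.

Lemma mate_unique p q q' : #|mates e A p| = 1 ->
  q \notin A -> q' \notin A -> mate e p q -> mate e p q' -> q = q'.
Proof.
move=> /eqP/cards1P[t mateE] qA q'A mpq mpq'.
have mate_t s : s \notin A -> mate e p s -> s = t.
  by move=> sA mps; apply/set1P; rewrite -mateE !inE sA.
by rewrite (mate_t q) // (mate_t q').
Qed.

Lemma mate_exists p : #|mates e A p| = 1 -> exists2 q, q \notin A & mate e p q.
Proof.
move=> /eqP/cards1P[q mateE].
by have := set11 q; rewrite -mateE !inE => /andP[]; exists q.
Qed.

Lemma path_side x s : path e x s -> (last x s \in A) = (x \in A) (+) odd (size s).
Proof.
elim: s x => [|y s IHs] x /=; first by rewrite addbF.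
by case/andP=> /adj_side exy /IHs ->; rewrite exy; case: (x \in A); case: (odd _).
Qed.

Lemma cycle_even c : cycle e c -> ~~ odd (size c).
Proof.
case: c => [|x s] //= /path_side; rewrite last_rcons size_rcons /=.
by case: (x \in A); case: (odd (size s)).
Qed.

Lemma sum_deg_sides : \sum_(a in A) deg e a = \sum_(p in ~: A) deg e p.
Proof.
have degE x (B : {set V}) : (forall y, e x y -> y \in B) -> deg e x = \sum_(y in B) e x y.
  move=> sub; rewrite /deg -sum1_card big_mkcond [RHS]big_mkcond /=.
  by apply: eq_bigr => y _; rewrite inE; case exy: (e x y); [rewrite (sub y exy) | case: ifP].
rewrite (eq_bigr (fun a => \sum_(p in ~: A) e a p)) => [|a aA]; last first.
  by apply: degE => y /adj_side; rewrite inE aA => ->.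
rewrite exchange_big /=; apply: eq_bigr => p; rewrite inE => pA.
by rewrite (degE p A) => [|y /adj_side ->//]; apply: eq_bigr => a _; rewrite e_sym.
Qed.

Hypothesis e_C4 : C4_free e.

Lemma ucycle_size_ge6 c : ucycle e c -> 3 <= size c -> 6 <= size c.
Proof.
case/andP=> /[dup] c_cycle /cycle_even; move: c_cycle.
case: c => [|u [|x [|w [|y [|? [|? ?]]]]]] //= /and5P[eux exw ewy eyu _] _.
rewrite !inE !negb_or => /and4P[/and3P[_ uw _] /andP[_ xy] _ _] _.
by exfalso; apply: (e_C4 uw xy eux _ _ ewy); rewrite e_sym.
Qed.

Variable r : nat.
Hypothesis degA : forall a, a \in A -> deg e a = r.+1.

Lemma card_nbrsD1 p a : p \notin A -> e p a -> #|nbrs e a :\ p| = r.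
Proof.
move=> pA epa; have aA : a \in A by rewrite (adj_side epa).
by have := degA aA; rewrite /deg (cardsD1 p) inE e_sym epa => -[].
Qed.

Lemma nbrs2_sub p : p \notin A -> nbrs2 e p \subset ~: A :\ p.
Proof.
move=> pA; apply/subsetP => q; rewrite !inE => /andP[-> /existsP[a /andP[epa eaq]]].
by rewrite (adj_side eaq) (adj_side epa) pA.
Qed.

Lemma card_nbrs2 p : p \notin A -> #|nbrs2 e p| = r * deg e p.
Proof.
move=> pA; have -> : nbrs2 e p = \bigcup_(a in nbrs e p) (nbrs e a :\ p).
  apply/setP => q; rewrite !inE; apply/andP/bigcupP.
    by case=> qp /existsP[a /andP[epa eaq]]; exists a; rewrite !inE ?qp.
  by case=> a; rewrite !inE => epa /andP[qp eaq]; split=> //; apply/existsP; exists a; rewrite epa.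
rewrite card_bigcup_disjoint.
  rewrite (eq_bigr (fun=> r)) => [|a]; last by rewrite inE; apply: card_nbrsD1.
  by rewrite sum_nat_const mulnC.
move=> a b; rewrite !inE => epa epb ab; rewrite -setI_eq0; apply/set0Pn => -[q].
rewrite !inE => /andP[/andP[qp eaq] /andP[_ ebq]].
by apply: (e_C4 ab qp); rewrite // e_sym.
Qed.

Lemma card_mates p :
  p \notin A -> #|mates e A p| + r * deg e p = #|~: A|.-1.
Proof.
move=> pA; have -> : mates e A p = (~: A :\ p) :\: nbrs2 e p.
  apply/setP => q; rewrite !inE /mate eq_sym.
  by case: (q \in A); case: (q != p); case: (common_nbr e p q).
rewrite cardsD (setIidPr (nbrs2_sub pA)) card_nbrs2 // subnK; last first.
  by rewrite -card_nbrs2 // subset_leq_card ?nbrs2_sub.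
by rewrite (cardsD1 p (~: A)) inE pA.
Qed.

Variable n : nat.
Hypothesis card_B : #|~: A| = r * n + 2.

Lemma deg_of_card_mates p :
  0 < r -> p \notin A -> #|mates e A p| = 1 -> deg e p = n.
Proof.
move=> r_gt0 pA mates1; have := card_mates pA; rewrite mates1 card_B addn2 /=.
by move/eqP; rewrite add1n eqSS eqn_pmul2l // => /eqP.
Qed.

Hypothesis degB : forall p, p \notin A -> deg e p = n.

Lemma card_mates_tight p : p \notin A -> #|mates e A p| = 1.
Proof. by move=> pA; have := card_mates pA; rewrite degB // card_B; lia. Qed.

Lemma ucycle6_exists :
  1 < r -> 1 < n -> exists c : seq V, [/\ ucycle e c, 3 <= size c & size c = 6].
Proof.
move=> r_gt1 n_gt1.
have no_C4 u w x y : u != w -> x != y -> e x u -> e x w -> e u y -> e w y -> False.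
  by move=> uw xy exu exw; apply: (e_C4 uw xy); rewrite e_sym.
have [p] : exists p, p \in ~: A by apply/card_gt0P; rewrite card_B addn2.
rewrite inE => pA; have : 1 < deg e p by rewrite degB.
case/card_gt1P => a1 [a2 []]; rewrite !inE => epa1 epa2 a12.
have [a1A a2A] : a1 \in A /\ a2 \in A by rewrite (adj_side epa1) (adj_side epa2).
have [q] : exists q, q \in nbrs e a1 :\ p.
  by apply/card_gt0P; rewrite (card_nbrsD1 pA epa1); apply: ltnW.
rewrite !inE => /andP[qp ea1q].
have : 1 < #|nbrs e a2 :\ p| by rewrite (card_nbrsD1 pA epa2).
case/card_gt1P => r1 [r2 []]; rewrite !inE => /andP[r1p ea2r1] /andP[r2p ea2r2] r12.
have [qA r1A r2A] : [/\ q \notin A, r1 \notin A & r2 \notin A].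
  by rewrite (adj_side ea1q) (adj_side ea2r1) (adj_side ea2r2) a1A a2A.
have q_neq s : s != p -> e a2 s -> q != s.
  move=> sp ea2s; apply/negP => /eqP qs; apply: (no_C4 a1 a2 p s) => //.
    by rewrite eq_sym.
  by rewrite -qs.
have [s [sp ea2s /existsP[b /andP[eqb ebs]]]] :
    exists s, [/\ s != p, e a2 s & common_nbr e q s].
  have not_mate s : ~~ mate e q s -> s != p -> e a2 s -> common_nbr e q s.
    by move=> + sp ea2s; rewrite /mate q_neq //= negbK.
  case: (boolP (mate e q r1)) => [mqr1 | /not_mate qr1]; last by exists r1; split; rewrite ?qr1.
  exists r2; split=> //; apply: not_mate r2p ea2r2; apply: contra r12 => mqr2.
  by rewrite (mate_unique (card_mates_tight qA) r1A r2A mqr1 mqr2).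
have sA : s \notin A by rewrite (adj_side ea2s) a2A.
have bA : b \in A by rewrite (adj_side eqb).
have b_a1 : a1 != b.
  apply/negP => /eqP a1b; apply: (no_C4 a1 a2 p s) => //; first by rewrite eq_sym.
  by rewrite a1b.
have b_a2 : b != a2.
  apply/negP => /eqP ba2; apply: (no_C4 a1 a2 p q) => //; first by rewrite eq_sym.
  by rewrite -ba2 e_sym.
have ne_sides x y : x \notin A -> y \in A -> x != y by move=> xA yA; apply: contraNneq xA => ->.
exists [:: p; a1; q; b; s; a2]; split=> //.
rewrite /ucycle /= epa1 ea1q eqb ebs (e_sym s) ea2s (e_sym a2) epa2 /= !inE !negb_or.
rewrite (eq_sym a1 q) (eq_sym a1 s) (eq_sym b s) (eq_sym p q) (eq_sym p s).
by rewrite qp sp (q_neq s) // b_a1 a12 b_a2 !(ne_sides p, ne_sides q, ne_sides s).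
Qed.

End BipartiteGraph.

Lemma biregular_count (V : finType) (e : rel V) (A : {set V}) (a b : nat) :
  symmetric e -> (forall x y, e x y -> (x \in A) != (y \in A)) ->
  (forall x, x \in A -> deg e x = a) -> (forall p, p \notin A -> deg e p = b) ->
  a * #|A| = b * #|~: A|.
Proof.
move=> e_sym e_bip degA degB.
have sumA : \sum_(x in A) deg e x = #|A| * a by rewrite -sum_nat_const; apply: eq_bigr.
have sumB : \sum_(p in ~: A) deg e p = #|~: A| * b.
  by rewrite -sum_nat_const; apply: eq_bigr => p; rewrite inE; apply: degB.
by rewrite mulnC -sumA sum_deg_sides // sumB mulnC.
Qed.

Lemma bb_order (V : finType) (e : rel V) (A : {set V}) (n : nat) :
  symmetric e -> (forall x y, e x y -> (x \in A) != (y \in A)) ->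
  (forall a, a \in A -> deg e a = 3) -> (forall p, p \notin A -> deg e p = n) ->
  3 * #|V| = (n + 3) * #|~: A|.
Proof.
move=> e_sym e_bip degA degB.
by rewrite -(cardsC A) mulnDr (biregular_count e_sym e_bip degA degB) mulnDl (mulnC 3).
Qed.

Lemma bb_points_lb (V : finType) (e : rel V) (A : {set V}) (n : nat) :
  n %% 3 = 2 -> simple_graph e -> girth_eq e 6 ->
  (forall x y, e x y -> (x \in A) != (y \in A)) ->
  (forall a, a \in A -> deg e a = 3) -> (forall p, p \notin A -> deg e p = n) ->
  2 * n + 2 <= #|~: A|.
Proof.
move=> n_mod3 e_simple e_girth e_bip degA degB; have [_ e_sym] := e_simple.
have e_C4 := C4_free_girth e_simple e_girth isT.
have [p pA] : exists p, p \notin A.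
  case: e_girth => -[c [/andP[c_cycle _] _ c_size]] _.
  case: c c_cycle c_size => [|x [|y c]] //= /andP[exy _] _.
  by case xA: (x \in A); [exists y; rewrite (adj_side e_bip exy) xA | exists x; rewrite xA].
have := card_mates e_sym e_bip e_C4 degA pA; rewrite degB //.
have B_mod3 : (n * #|~: A|) %% 3 = 0 by rewrite -(biregular_count e_sym e_bip degA degB) modnMr.
by rewrite -modnMm n_mod3 in B_mod3; lia.
Qed.

Lemma bb_graph_of_mates (V : finType) (e : rel V) (A : {set V}) (n : nat) :
  1 < n -> simple_graph e -> (forall x y, e x y -> (x \in A) != (y \in A)) ->
  (forall a, a \in A -> deg e a = 3) -> C4_free e -> #|~: A| = 2 * n + 2 ->
  (forall p, p \notin A -> #|mates e A p| = 1) ->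
  bb_graph 3 n 6 e.
Proof.
move=> n_gt1 e_simple e_bip degA e_C4 card_B mates1; have [_ e_sym] := e_simple.
have degB p : p \notin A -> deg e p = n.
  by move=> pA; apply: (deg_of_card_mates e_sym e_bip e_C4 degA card_B) => //; apply: mates1.
split=> //; first by exists A.
split; first exact: (ucycle6_exists e_sym e_bip e_C4 degA card_B degB).
exact: ucycle_size_ge6 e_sym e_bip e_C4.
Qed.

(** * Extremal graphs are derived Steiner triple systems *)

Section DerivedDesign.
Variables (V : finType) (e : rel V) (A : {set V}).
Hypothesis e_sym : symmetric e.
Hypothesis e_bip : forall x y, e x y -> (x \in A) != (y \in A).
Hypothesis e_C4 : C4_free e.
Hypothesis degA : forall a, a \in A -> deg e a = 3.
Hypothesis mates1 : forall p, p \notin A -> #|mates e A p| = 1.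

Variables (v : nat) (x0 : 'I_v) (pt : V -> 'I_v).
Hypothesis pt_inj : {in ~: A &, injective pt}.
Hypothesis pt_img : pt @: (~: A) = [set~ x0].

Lemma pt_neq x : x \notin A -> pt x != x0.
Proof. by move=> xA; rewrite -in_setC1 -pt_img imset_f ?inE. Qed.

Lemma pt_onto i : i != x0 -> exists2 x, x \notin A & i = pt x.
Proof. by rewrite -in_setC1 -pt_img => /imsetP[x]; rewrite inE; exists x. Qed.

Lemma mem_pt x (S : {set V}) : x \notin A -> S \subset ~: A -> (pt x \in pt @: S) = (x \in S).
Proof.
move=> xA /subsetP SA; apply/imsetP/idP => [[y yS /pt_inj]|xS]; last by exists x.
by rewrite inE => /(_ xA (SA y yS)) ->.
Qed.

Lemma nbrs_sub a : a \in A -> nbrs e a \subset ~: A.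
Proof. by move=> aA; apply/subsetP => x; rewrite !inE => /(adj_side e_bip) ->; rewrite aA. Qed.

Definition line_block a := pt @: nbrs e a.
Definition mate_block p q := [set x0; pt p; pt q].
Definition derived_blocks : {set {set 'I_v}} :=
  [set line_block a | a in A] :|:
  [set mate_block p q | p in ~: A, q in mates e A p].

Lemma mem_line_block a x : a \in A -> x \notin A -> (pt x \in line_block a) = e a x.
Proof. by move=> aA xA; rewrite mem_pt ?nbrs_sub // inE. Qed.

Lemma x0_notin_line_block a : a \in A -> x0 \notin line_block a.
Proof.
move=> aA; apply/imsetP => -[x]; rewrite inE => eax x0E.
have xA : x \notin A by rewrite (adj_side e_bip eax) aA.
by have := pt_neq xA; rewrite -x0E eqxx.
Qed.

Lemma mem_mate_block p q x :
  p \notin A -> q \notin A -> x \notin A -> (pt x \in mate_block p q) = (x == p) || (x == q).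
Proof.
move=> pA qA xA; rewrite !inE (negbTE (pt_neq xA)).
by rewrite !(inj_in_eq pt_inj) ?inE.
Qed.

Lemma point_cases i : i = x0 \/ exists2 x, x \notin A & i = pt x.
Proof. by case: (eqVneq i x0) => [|/pt_onto]; [left | right]. Qed.

Lemma mem_line_blockP a i : reflect (exists2 x, e a x & i = pt x) (i \in line_block a).
Proof. by apply: (iffP imsetP) => -[x]; rewrite ?inE => eax ->; exists x; rewrite ?inE. Qed.

Lemma line_block_meet a a' i j : a \in A -> a' \in A -> i != j ->
  i \in line_block a -> j \in line_block a -> i \in line_block a' -> j \in line_block a' ->
  a = a'.
Proof.
move=> aA a'A ij /mem_line_blockP[x eax iE] /mem_line_blockP[y eay jE].
rewrite {}iE {}jE in ij *.
have [xA yA] : x \notin A /\ y \notin A by rewrite (adj_side e_bip eax) (adj_side e_bip eay) aA.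
rewrite !mem_line_block // => ea'x ea'y.
apply/eqP; apply: contraT => aa'; case: (e_C4 aa' (_ : x != y) eax ea'x eay ea'y).
by apply: contra_neq ij => ->.
Qed.

Lemma line_mate_meet a p q i j : a \in A -> p \notin A -> q \notin A -> mate e p q -> i != j ->
  i \in line_block a -> j \in line_block a -> i \in mate_block p q -> j \in mate_block p q ->
  False.
Proof.
move=> aA pA qA mpq ij /mem_line_blockP[x eax iE] /mem_line_blockP[y eay jE].
rewrite {}iE {}jE in ij *.
have [xA yA] : x \notin A /\ y \notin A by rewrite (adj_side e_bip eax) (adj_side e_bip eay) aA.
rewrite !mem_mate_block // => xpq ypq.
have {}mpq : mate e x y.
  have xy : x != y by apply: contra_neq ij => ->.
  by move: xpq ypq xy; do 2!case/orP=> /eqP->; rewrite ?eqxx // mate_sym.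
by case/andP: mpq => _ /existsP; apply; exists a; rewrite e_sym eax.
Qed.

Lemma mate_block_meet p q p' q' i j :
  p \notin A -> q \notin A -> p' \notin A -> q' \notin A ->
  mate e p q -> mate e p' q' -> i != j ->
  i \in mate_block p q -> j \in mate_block p q ->
  i \in mate_block p' q' -> j \in mate_block p' q' ->
  mate_block p q = mate_block p' q'.
Proof.
move=> pA qA p'A q'A mpq mp'q' ij ipq jpq ip'q' jp'q'.
have [x xA [xpq xp'q']] :
    exists2 x, x \notin A & pt x \in mate_block p q /\ pt x \in mate_block p' q'.
  case: (point_cases i) => [i0|[x xA iE]]; last by exists x => //; rewrite -iE.
  case: (point_cases j) => [j0|[x xA jE]]; last by exists x => //; rewrite -jE.
  by rewrite i0 j0 eqxx in ij.
have blockE s t : s \notin A -> t \notin A -> mate e s t -> pt x \in mate_block s t ->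
    exists y, [/\ y \notin A, mate e x y & mate_block s t = mate_block x y].
  move=> sA tA mst; rewrite mem_mate_block // => /orP[]/eqP->; first by exists t.
  exists s; split; rewrite // 1?mate_sym //.
  by apply/setP => z; rewrite !inE; case: (z == x0); case: (z == pt s); case: (z == pt t).
have [y [yA mxy ->]] := blockE p q pA qA mpq xpq.
have [y' [y'A mxy' ->]] := blockE p' q' p'A q'A mp'q' xp'q'.
by rewrite (mate_unique (mates1 xA) yA y'A mxy mxy').
Qed.

Lemma line_block_in a : a \in A -> line_block a \in derived_blocks.
Proof. by move=> aA; rewrite inE imset_f. Qed.

Lemma mate_block_in p q :
  p \notin A -> q \notin A -> mate e p q -> mate_block p q \in derived_blocks.
Proof.
by move=> pA qA mpq; rewrite inE; apply/orP; right; apply/imset2P; exists p q; rewrite ?inE ?pA ?qA.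
Qed.

Lemma derived_blocksP T : T \in derived_blocks ->
  (exists2 a, a \in A & T = line_block a) \/
  (exists p q, [/\ p \notin A, q \notin A, mate e p q & T = mate_block p q]).
Proof.
case/setUP => [/imsetP[a aA ->] | /imset2P[p q]]; first by left; exists a.
by rewrite !inE => pA /andP[qA mpq] ->; right; exists p, q.
Qed.

Lemma card_derived_block T : T \in derived_blocks -> #|T| = 3.
Proof.
case/derived_blocksP => [[a aA ->] | [p [q [pA qA /andP[pq _] ->]]]].
  rewrite card_in_imset; first exact: degA.
  by move=> x y /(subsetP (nbrs_sub aA)) xA /(subsetP (nbrs_sub aA)); apply: pt_inj.
by rewrite cards3 // 1?[x0 == _]eq_sym ?pt_neq // (inj_in_eq pt_inj) ?inE.
Qed.

Lemma derived_cover i j : i != j -> exists2 T, T \in derived_blocks & (i \in T) && (j \in T).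
Proof.
wlog j_x0 : i j / j != x0.
  move=> hwlog ij; case: (eqVneq j x0) => [j0 | jx0]; last exact: hwlog jx0 ij.
  have ix0 : i != x0 by rewrite -j0.
  have ji : j != i by rewrite eq_sym.
  have [T TB /andP[jT iT]] := hwlog j i ix0 ji.
  by exists T; rewrite ?iT.
have [y yA ->] := pt_onto j_x0; case: (point_cases i) => [-> _ | [x xA ->] xy].
  have [z zA myz] := mate_exists (mates1 yA).
  by exists (mate_block y z); [exact: mate_block_in | rewrite !inE !eqxx orbT].
have {}xy : x != y by apply: contra_neq xy => ->.
case mxy: (mate e x y).
  by exists (mate_block x y); [exact: mate_block_in | rewrite !inE !eqxx !orbT].
move: mxy; rewrite /mate xy => /negbFE/existsP[a /andP[exa eay]].
have aA : a \in A by rewrite (adj_side e_bip exa).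
by exists (line_block a); [exact: line_block_in | rewrite !mem_line_block // eay e_sym exa].
Qed.

Lemma derived_block_unique i j T T' : i != j ->
  T \in derived_blocks -> T' \in derived_blocks ->
  i \in T -> j \in T -> i \in T' -> j \in T' -> T = T'.
Proof.
move=> ij /derived_blocksP[[a aA ->]|[p [q [pA qA mpq ->]]]].
  case/derived_blocksP => [[a' a'A ->]|[p' [q' [p'A q'A mp'q' ->]]]] *.
    by congr line_block; apply: (line_block_meet aA a'A ij).
  by case: (line_mate_meet aA p'A q'A mp'q' ij).
case/derived_blocksP => [[a' a'A ->]|[p' [q' [p'A q'A mp'q' ->]]]] *.
  by case: (line_mate_meet a'A pA qA mpq ij).
exact: (mate_block_meet pA qA p'A q'A mpq mp'q' ij).
Qed.

Lemma line_block_inj : {in A &, injective line_block}.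
Proof.
move=> a a' aA a'A aa'; have : 1 < #|line_block a| by rewrite card_derived_block ?line_block_in.
case/card_gt1P => i [j [ia ja ij]].
by apply: (line_block_meet aA a'A ij ia ja); rewrite -aa'.
Qed.

Definition derived_embedding (u : V) : 'I_v + {set 'I_v} :=
  if u \in A then inr (line_block u) else inl (pt u).

Lemma derived_iso : iso_induced e (@inc_rel v) (derived_vertices derived_blocks x0).
Proof.
exists derived_embedding; rewrite /derived_embedding; split.
- move=> u w; case: ifP => uA; case: ifP => wA // [].
    exact: line_block_inj.
  by apply: pt_inj; rewrite inE ?uA ?wA.
- apply/setP => -[i | T]; rewrite inE; apply/imsetP/idP.
  + by case=> u _; case: ifP => // uA [->]; apply/pt_neq/negbT.
  + by case/pt_onto => u uA ->; exists u; rewrite ?inE ?(negbTE uA).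
  + by case=> u _; case: ifP => // uA [->]; rewrite line_block_in ?x0_notin_line_block.
  + case/andP => /derived_blocksP[[a aA ->] _ | [p [q [_ _ _ ->]]]].
      by exists a; rewrite ?aA.
    by rewrite !inE eqxx.
- move=> u w; case: ifP => uA; case: ifP => wA /=.
  + by apply/negbTE/negP => /(adj_side e_bip); rewrite uA wA.
  + by rewrite mem_line_block // wA.
  + by rewrite mem_line_block // ?uA // e_sym.
  + by apply/negbTE/negP => /(adj_side e_bip); rewrite uA wA.
Qed.

End DerivedDesign.

Lemma STS_of_unique_blocks (v : nat) (B : {set {set 'I_v}}) :
  (forall T, T \in B -> #|T| = 3) ->
  (forall i j, i != j -> exists2 T, T \in B & (i \in T) && (j \in T)) ->
  (forall i j T T', i != j -> T \in B -> T' \in B ->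
     i \in T -> j \in T -> i \in T' -> j \in T' -> T = T') ->
  STS B.
Proof.
move=> B3 B_cover B_unique; split=> // i j ij; have [T TB /andP[iT jT]] := B_cover i j ij.
apply/eqP/cards1P; exists T; apply/setP => T'; rewrite !inE.
apply/andP/eqP => [[T'B /andP[iT' jT']] | ->]; last by rewrite TB iT jT.
exact: (B_unique i j).
Qed.

Lemma derived_STS_of_mates (V : finType) (e : rel V) (A : {set V}) (n : nat) :
  simple_graph e -> (forall x y, e x y -> (x \in A) != (y \in A)) ->
  (forall a, a \in A -> deg e a = 3) -> C4_free e -> #|~: A| = 2 * n + 2 ->
  (forall p, p \notin A -> #|mates e A p| = 1) ->
  exists (B : {set {set 'I_(2 * n + 3)}}) (x0 : 'I_(2 * n + 3)),
    STS B /\ iso_induced e (@inc_rel (2 * n + 3)) (derived_vertices B x0).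
Proof.
move=> [_ e_sym] e_bip degA e_C4 card_B mates1.
have x0_lt : 2 * n + 2 < 2 * n + 3 by rewrite ltn_add2l.
pose x0 := Ordinal x0_lt.
have [||pt [pt_inj pt_img]] := @imset_bij_card _ _ (~: A) [set~ x0].
- by rewrite card_B addn2.
- by rewrite cardsC1 card_ord card_B; lia.
exists (derived_blocks e A x0 pt), x0; split; last exact: derived_iso.
apply: STS_of_unique_blocks.
- exact: card_derived_block.
- exact: derived_cover.
- exact: derived_block_unique.
Qed.

(** * Skolem's construction *)

Section SkolemConstruction.
Variable k : nat.

(* Skolem's half-idempotent commutative quasigroup on [Z_2k]: [skolem_op x y]
   is the [z] with [x + y = 2z] if [z < k], and [x + y = 2(z - k) + 1] if
   [k <= z], modulo [2k]. *)
Definition skolem_op (x y : nat) : nat :=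
  let s := if x + y < 2 * k then x + y else x + y - 2 * k in
  if odd s then s./2 + k else s./2.

Lemma skolem_op_spec x y : x < 2 * k -> y < 2 * k ->
  let z := skolem_op x y in
  z < 2 * k /\
  (z < k /\ (x + y = 2 * z \/ x + y = 2 * z + 2 * k) \/
   k <= z /\ (x + y + 2 * k = 2 * z + 1 \/ x + y = 2 * z + 1)).
Proof.
move=> x_lt y_lt; rewrite /skolem_op.
set s := if x + y < 2 * k then _ else _.
have : s < 2 * k /\ (s = x + y \/ s + 2 * k = x + y) by rewrite /s; case: ifP; lia.
by have := odd_double_half s; rewrite -muln2; case: (odd s) => /=; lia.
Qed.

Lemma skolem_op_lt x y : x < 2 * k -> y < 2 * k -> skolem_op x y < 2 * k.
Proof. by move=> x_lt y_lt; case: (skolem_op_spec x_lt y_lt). Qed.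

Lemma skolem_opC x y : skolem_op x y = skolem_op y x.
Proof. by rewrite /skolem_op addnC. Qed.

Lemma skolem_opK x y y' : x < 2 * k -> y < 2 * k -> y' < 2 * k ->
  skolem_op x y = skolem_op x y' -> y = y'.
Proof.
by move=> x_lt y_lt y'_lt; have := skolem_op_spec x_lt y_lt; have := skolem_op_spec x_lt y'_lt; lia.
Qed.

Lemma skolem_op_onto x z :
  x < 2 * k -> z < 2 * k -> exists2 y, y < 2 * k & skolem_op x y = z.
Proof.
move=> x_lt z_lt; pose s := if z < k then 2 * z else 2 * (z - k) + 1.
pose y := if x <= s then s - x else s + 2 * k - x.
have y_lt : y < 2 * k by rewrite /y /s; case: ifP; case: ifP; lia.
exists y => //; have := skolem_op_spec x_lt y_lt.
by rewrite /y /s; case: ifP; case: ifP; lia.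
Qed.

Lemma skolem_op_fix x y : x < 2 * k -> y < 2 * k -> x != y -> skolem_op x y = x -> k <= x.
Proof. by move=> x_lt y_lt; have := skolem_op_spec x_lt y_lt; lia. Qed.

(* Skolem's triple system lives on [Z_2k x Z_3] and a point [oo]; its blocks
   avoiding [oo] are the verticals [{(x,0), (x,1), (x,2)}] for [x < k] and the
   triangles [{(x,i), (y,i), (x o y, i+1)}] for [x < y]. *)
Definition point := ('I_(2 * k) * 'I_3)%type.

Definition triple := {t : 'I_3 * 'I_(2 * k) * 'I_(2 * k) | t.1.2 < t.2}.

Definition block_index := ('I_k + triple)%type.

Definition skolem_op_ord (x y : 'I_(2 * k)) : 'I_(2 * k) :=
  Ordinal (skolem_op_lt (ltn_ord x) (ltn_ord y)).

Definition vertical (x : 'I_k) : {set point} :=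
  [set (widen_ord (leq_pmull k (isT : 0 < 2)) x, l) | l : 'I_3].

Definition triangle (i : 'I_3) (x y : 'I_(2 * k)) : {set point} :=
  [set (x, i); (y, i); (skolem_op_ord x y, ordS i)].

Definition block (b : block_index) : {set point} :=
  match b with
  | inl x => vertical x
  | inr t => let: (i, x, y) := val t in triangle i x y
  end.

Lemma mem_vertical x (p : point) : (p \in vertical x) = (p.1 == x :> nat).
Proof.
apply/imsetP/idP => [[l _ ->] | px]; first exact: eqxx.
exists p.2 => //.
by case: p px => a l /= ax; congr pair; apply: val_inj; apply/eqP.
Qed.

Lemma mem_triangle i x y (p : point) : (p \in triangle i x y) =
  (p.1 == x :> nat) && (p.2 == i :> nat) || (p.1 == y :> nat) && (p.2 == i :> nat)
  || (p.1 == skolem_op x y :> nat) && (p.2 == i.+1 %% 3 :> nat).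
Proof. by case: p => a l; rewrite !inE !xpair_eqE -!val_eqE. Qed.

Lemma card_block b : #|block b| = 3.
Proof.
case: b => [x | [[[i x] y] /= xy]].
  by rewrite card_imset ?card_ord // => l l' [].
have := skolem_op_spec (ltn_ord x) (ltn_ord y); have := ltn_ord i.
by rewrite cards3 // !xpair_eqE -!val_eqE /=; lia.
Qed.

Lemma triangle_level i (x y : 'I_(2 * k)) (p q : point) : x < y -> p != q ->
  p \in triangle i x y -> q \in triangle i x y -> i = if ordS p.2 == q.2 then p.2 else q.2.
Proof.
case: p q => [a l] [c l'] xy; rewrite xpair_eqE !mem_triangle -!val_eqE /= => pq hp hq.
have := ltn_ord i; have := ltn_ord l; have := ltn_ord l'.
by case: ifP => h *; apply: ord_inj; lia.
Qed.

Lemma skolem_op_pair (x y x' y' : 'I_(2 * k)) : x < y -> x' < y' ->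
  skolem_op x y = skolem_op x' y' ->
  [|| x == x' :> nat, x == y' :> nat, y == x' :> nat | y == y' :> nat] ->
  x = x' /\ y = y'.
Proof.
move=> xy x'y' o_eq shared.
have [x_lt y_lt x'_lt y'_lt] := And4 (ltn_ord x) (ltn_ord y) (ltn_ord x') (ltn_ord y').
suff [ex ey] : x = x' :> nat /\ y = y' :> nat by rewrite (ord_inj ex) (ord_inj ey).
case/or4P: shared => /eqP e.
- by split=> //; apply: (skolem_opK x_lt) => //; rewrite o_eq e.
- suff : y = x' :> nat by lia.
  by apply: (skolem_opK x_lt) => //; rewrite o_eq e skolem_opC.
- suff : x = y' :> nat by lia.
  by apply: (skolem_opK y_lt) => //; rewrite skolem_opC o_eq e.
- by split=> //; apply: (skolem_opK y_lt) => //; rewrite skolem_opC o_eq e skolem_opC.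
Qed.

Lemma triangle_unique i i' (x y x' y' : 'I_(2 * k)) (p q : point) :
  x < y -> x' < y' -> p != q -> p \in triangle i x y -> q \in triangle i x y ->
  p \in triangle i' x' y' -> q \in triangle i' x' y' -> (i, x, y) = (i', x', y').
Proof.
move=> xy x'y' pq px qx px' qx'.
have i'i : i' = i by rewrite (triangle_level xy pq px qx) (triangle_level x'y' pq px' qx').
subst i'.
suff [-> ->] : x = x' /\ y = y' by [].
move: pq px qx px' qx'; case: p q => [a l] [c m].
rewrite xpair_eqE !mem_triangle -!val_eqE /=.
(* Abstracting the upper level keeps [%%] out of the [lia] calls below. *)
have : i.+1 %% 3 != i by case: i => [[|[|[|]]]].
move: (i.+1 %% 3) => j ji pq px qx px' qx'.
have : (skolem_op x y = skolem_op x' y' /\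
        [|| x == x' :> nat, x == y' :> nat, y == x' :> nat | y == y' :> nat]) \/
       (x = x' :> nat /\ y = y' :> nat).
  by move: px qx px' qx'; do 4!case/orP=> [/orP[]|] /andP[/eqP ? /eqP ?]; lia.
case=> [[o_eq shared] | [ex ey]]; last by rewrite (ord_inj ex) (ord_inj ey).
exact: skolem_op_pair.
Qed.

Lemma vertical_triangle_meet x i (y z : 'I_(2 * k)) (p q : point) : y < z -> p != q ->
  p \in vertical x -> q \in vertical x -> p \in triangle i y z -> q \in triangle i y z -> False.
Proof.
move=> yz pq; have [y_lt z_lt] := (ltn_ord y, ltn_ord z).
have fix_y : skolem_op y z = y -> k <= y by apply: skolem_op_fix; rewrite // neq_ltn yz.
have fix_z : skolem_op y z = z -> k <= z.
  by rewrite skolem_opC; apply: skolem_op_fix; rewrite // neq_ltn yz orbT.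
move: pq; case: p q => [a l] [c m]; rewrite xpair_eqE !mem_vertical !mem_triangle -!val_eqE /=.
by have := ltn_ord x; lia.
Qed.

Lemma block_unique (p q : point) (b b' : block_index) : p != q ->
  p \in block b -> q \in block b -> p \in block b' -> q \in block b' -> b = b'.
Proof.
case: b b' => [x | [[[i x] y] /= xy]] [x' | [[[i' x'] y'] /= x'y']] pq /=.
- rewrite !mem_vertical => /eqP px _ /eqP px' _.
  by congr inl; apply: ord_inj; rewrite -px -px'.
- by move=> px qx px' qx'; case: (vertical_triangle_meet x'y' pq px qx px' qx').
- by move=> px qx px' qx'; case: (vertical_triangle_meet xy pq px' qx' px qx).
move=> px qx px' qx'; congr inr; apply: val_inj => /=.
exact: (triangle_unique xy x'y' pq px qx px' qx').
Qed.

Lemma triangle_block i (x y : 'I_(2 * k)) : x != y -> exists b, block b = triangle i x y.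
Proof.
rewrite neq_ltn => /orP[xy | yx]; first by exists (inr (exist _ (i, x, y) xy)).
exists (inr (exist _ (i, y, x) yx)); rewrite /= /triangle.
have -> : skolem_op_ord y x = skolem_op_ord x y by apply: val_inj; rewrite /= skolem_opC.
by apply/setP => p; rewrite !inE; case: (p == (x, i)); case: (p == (y, i)).
Qed.

Lemma vertical_block (x : 'I_(2 * k)) : x < k -> exists b, forall l, (x, l) \in block b.
Proof. by move=> x_lt; exists (inl (Ordinal x_lt)) => l; rewrite /= mem_vertical. Qed.

Definition half_turn (a : nat) : nat := if k <= a then a - k else a + k.

Lemma half_turn_lt (a : 'I_(2 * k)) : half_turn a < 2 * k.
Proof. by have := ltn_ord a; rewrite /half_turn; case: ifP; lia. Qed.

(* The blocks through [oo] are the [{oo, (x + k, i), (x, i + 1)}] for [x < k]. *)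
Definition skolem_mate (p : point) : point :=
  (Ordinal (half_turn_lt p.1), if k <= p.1 then ordS p.2 else ord_pred p.2).

Lemma skolem_mate_neq p : skolem_mate p != p.
Proof.
case: p => a l; rewrite /skolem_mate /half_turn xpair_eqE -!val_eqE /=.
by case: ifP => _ /=; lia.
Qed.

Lemma skolem_mate_apart p b : ~~ ((p \in block b) && (skolem_mate p \in block b)).
Proof.
case: p => a l; rewrite /skolem_mate /half_turn /=; have := ltn_ord a; have := ltn_ord l.
case: b => [x | [[[i x] y] /= xy]] /=; rewrite ?mem_vertical ?mem_triangle /=.
  by case: ifP => /=; lia.
have := skolem_op_spec (ltn_ord x) (ltn_ord y); have := ltn_ord i.
by case: ifP => /=; lia.
Qed.

Lemma skolem_mateK : involutive skolem_mate.
Proof.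
case=> a l; apply/eqP; rewrite /skolem_mate /half_turn xpair_eqE -!val_eqE /=.
have [a_lt l_lt] := (ltn_ord a, ltn_ord l); case: (leqP k a) => ka /=.
  by rewrite (_ : k <= a - k = false) /=; lia.
by rewrite (_ : k <= a + k) /=; lia.
Qed.

Lemma ord3_cases (i j : 'I_3) : [|| j == i, j == ordS i | i == ordS j].
Proof. by case: i j => [[|[|[|//]]] ?] [[|[|[|//]]] ?]. Qed.

Lemma skolem_cover p q : p != q -> q != skolem_mate p ->
  exists b, (p \in block b) && (q \in block b).
Proof.
wlog lvl : p q / (q.2 == p.2) || (q.2 == ordS p.2).
  move=> hwlog pq qp; have := ord3_cases p.2 q.2.
  rewrite orbA => /orP[lvl | pq_lvl]; first exact: hwlog.
  have [|||b /andP[qb pb]] := hwlog q p; rewrite 1?eq_sym ?pq_lvl ?orbT //.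
    by rewrite -(inj_eq (can_inj skolem_mateK)) skolem_mateK.
  by exists b; rewrite pb qb.
case: p q lvl => [a l] [c m] /= /orP[]/eqP-> pq qp.
  have ac : a != c by apply: contraNneq pq => ->.
  by have [b bE] := triangle_block l ac; exists b; rewrite bE !inE !eqxx !orbT.
have [a_lt c_lt] := (ltn_ord a, ltn_ord c).
have [y y_lt opE] := skolem_op_onto a_lt c_lt; pose y' := Ordinal y_lt.
case: (eqVneq a y') => [ya | ay].
  have := skolem_op_spec a_lt a_lt; rewrite {2}(congr1 val ya) opE /=.
  case: (ltnP a k) => ak spec.
    have [b bP] := vertical_block ak; exists b.
    by rewrite bP (_ : c = a) ?bP //; apply: ord_inj; lia.
  by move: qp; rewrite /skolem_mate /half_turn xpair_eqE -!val_eqE /= ak /=; lia.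
have [b bE] := triangle_block l ay; exists b; rewrite bE !inE eqxx /=.
by rewrite (_ : c = skolem_op_ord a y') ?eqxx ?orbT //; apply: val_inj.
Qed.

Definition skolem_graph : rel (point + block_index) :=
  fun u w => match u, w with
             | inl p, inr b | inr b, inl p => p \in block b
             | _, _ => false
             end.

Definition skolem_blocks : {set point + block_index} :=
  [set u | if u is inr _ then true else false].

Lemma skolem_graph_simple : simple_graph skolem_graph.
Proof. by split; [case | case=> [p|b] [q|c]]. Qed.

Lemma skolem_graph_bip u w :
  skolem_graph u w -> (u \in skolem_blocks) != (w \in skolem_blocks).
Proof. by case: u w => [p|b] [q|c]; rewrite !inE. Qed.

Lemma skolem_deg_block u : u \in skolem_blocks -> deg skolem_graph u = 3.
Proof.
case: u => [p|b]; first by rewrite inE.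
move=> _; rewrite /deg; have -> : [set w | skolem_graph (inr b) w] = inl @: block b.
  apply/setP => -[p|c]; rewrite !inE; first by rewrite (mem_imset _ _ (@inl_inj _ _)).
  by apply/esym/imsetP => -[].
by rewrite card_imset ?card_block //; exact: inl_inj.
Qed.

Lemma skolem_graph_C4 : C4_free skolem_graph.
Proof.
move=> [p|b] [q|b'] [r|c] [s|c'] //= pq rs pr qr ps qs.
  by move: rs; rewrite (block_unique pq pr qr ps qs) eqxx.
by move: pq; rewrite (block_unique rs pr ps qr qs) eqxx.
Qed.

Lemma card_skolem_points : #|~: skolem_blocks| = 6 * k.
Proof.
have -> : ~: skolem_blocks = inl @: [set: point].
  apply/setP => -[p|b]; rewrite !inE; first by rewrite imset_f ?inE.
  by apply/esym/imsetP => -[].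
by rewrite card_imset ?cardsT ?card_prod ?card_ord; [lia | exact: inl_inj].
Qed.

Lemma skolem_mates u : u \notin skolem_blocks ->
  #|mates skolem_graph skolem_blocks u| = 1.
Proof.
case: u => [p _|b]; last by rewrite inE.
apply/eqP/cards1P; exists (inl (skolem_mate p)); apply/setP => -[q|b]; rewrite !inE //=.
rewrite /mate /common_nbr !(inj_eq (@inl_inj _ _)).
apply/andP/eqP => [[pq /existsPn no_block] | ->].
  case: (eqVneq q (skolem_mate p)) => // qm; have [b /andP[pb qb]] := skolem_cover pq qm.
  by have := no_block (inr b); rewrite /= pb qb.
split; first by rewrite eq_sym skolem_mate_neq.
by apply/existsPn => -[//|b] /=; apply: skolem_mate_apart.
Qed.

End SkolemConstruction.

Arguments skolem_graph : clear implicits.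

Lemma bb_graph_exists (n : nat) : 0 < n -> n %% 3 = 2 ->
  exists (V : finType) (e : rel V), bb_graph 3 n 6 e /\ 3 * #|V| = (n + 3) * (2 * n + 2).
Proof.
move=> n_gt0 n_mod3; pose k := n.+1 %/ 3.
have card_points : #|~: skolem_blocks k| = 2 * n + 2 by rewrite card_skolem_points /k; lia.
have [_ e_sym] := skolem_graph_simple k.
have e_bip := @skolem_graph_bip k; have degA := @skolem_deg_block k.
have e_C4 := @skolem_graph_C4 k; have mates1 := @skolem_mates k.
have degB u : u \notin skolem_blocks k -> deg (skolem_graph k) u = n.
  by move=> uB; apply: (deg_of_card_mates e_sym e_bip e_C4 degA card_points) => //; apply: mates1.
exists _, (skolem_graph k); split; last by rewrite (bb_order e_sym e_bip degA degB) card_points.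
by apply: bb_graph_of_mates (skolem_graph_simple k) e_bip degA e_C4 card_points mates1; lia.
Qed.

Theorem mainTheorem2 (n : nat) (hn : 0 < n) (hmod : n %% 3 = 2) :
  (exists (V : finType) (e : rel V),
      bb_cage 3 n 6 e /\ 3 * #|V| = 3 * (2 + 2 * n) + (2 + 2 * n) * n) /\
  (forall (V : finType) (e : rel V), bb_cage 3 n 6 e ->
     exists (B : {set {set 'I_(2 * n + 3)}}) (x0 : 'I_(2 * n + 3)),
       STS B /\ iso_induced e (@inc_rel (2 * n + 3)) (derived_vertices B x0)).
Proof.
have [V0 [e0 [bb0 order0]]] := bb_graph_exists hn hmod.
have order_lb (W : finType) (f : rel W) : bb_graph 3 n 6 f -> 3 * #|V0| <= 3 * #|W|.
  case=> f_simple [A [f_bip degA degB]] f_girth; have [_ f_sym] := f_simple.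
  rewrite order0 (bb_order f_sym f_bip degA degB) leq_mul2l.
  by rewrite (bb_points_lb hmod f_simple f_girth f_bip degA degB) orbT.
split.
  exists V0, e0; split; last by rewrite order0; lia.
  by split=> // W f /order_lb; rewrite leq_pmul2l.
move=> V e [[e_simple [A [e_bip degA degB]] e_girth] e_min]; have [_ e_sym] := e_simple.
have e_C4 := C4_free_girth e_simple e_girth isT.
have card_B : #|~: A| = 2 * n + 2.
  apply/eqP; rewrite eqn_leq (bb_points_lb hmod e_simple e_girth e_bip degA degB) andbT.
  have := e_min V0 e0 bb0; rewrite -(leq_pmul2l (isT : 0 < 3)) order0.
  by rewrite (bb_order e_sym e_bip degA degB) leq_pmul2l ?addn3.
apply: (derived_STS_of_mates e_simple e_bip degA e_C4 card_B) => p pA.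
exact: (card_mates_tight e_sym e_bip e_C4 degA card_B degB pA).
Qed.
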